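(* Let $G=(V,E,\mathcal{P},s,t,c)$ be an update flow network with exactly two update flow pairs $\mathcal{P}=\{B,R\}$, $B=(B^o,B^u)$ of demand $d_B$ and $R=(R^o,R^u)$ of demand $d_R$, such that $B^o\cup B^u$ and $R^o\cup R^u$ are acyclic. If the dependency graph $D$ of $G$ contains a directed cycle, then there is no feasible update sequence for $G$.
   Context: A flow network is $G=(V,E,s,t,c)$ where $(V,E)$ is a directed graph, $s,t\in V$, and $c\colon E\to\mathbb{N}$ is a capacity function. An $(s,t)$-flow of demand $d\in\mathbb{N}$ is a directed path $F$ from $s$ to $t$ with $d\le c(e)$ for all $e\in E(F)$. An update flow pair $P=(F^o,F^u)$ consists of two $(s,t)$-flows, the old flow $F^o$ and the new flow $F^u$, both of the same demand $d_P$. An update flow network $G=(V,E,\mathcal{P},s,t,c)$ is a flow network together with a finite family $\mathcal{P}$ of update flow pairs whose old flows are jointly valid: $\sum_{P\in\mathcal{P}:\,e\in E(F^o_P)} d_P\le c(e)$ for every $e\in E$. An update is an element $(v,P)\in V\times\mathcal{P}$. For a set $U\subseteq V\times\mathcal{P}$ of updates and a pair $P=(F^o,F^u)$, an edge $(u,v)\in E(F^o)\cup E(F^u)$ is active for $P$ with respect to $U$ if either $(u,P)\notin U$ and $(u,v)\in E(F^o)$, or $(u,P)\in U$ and $(u,v)\in E(F^u)$; otherwise it is inactive. $P$ is transient for $U$ if the graph formed by the edges active for $P$ w.r.t. $U$ contains exactly one directed $s$–$t$ path $T_{P,U}$. The family $\mathcal{P}$ is a transient family for $U$ if every $P\in\mathcal{P}$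 is transient for $U$ and $\sum_{P\in\mathcal{P}:\,e\in E(T_{P,U})} d_P\le c(e)$ for every edge $e$. An update sequence is an ordered partition $\mathfrak{R}=(\mathfrak{r}_1,\dots,\mathfrak{r}_\ell)$ of $V\times\mathcal{P}$ into rounds; it is feasible if for every $i$ and every $S\subseteq\mathfrak{r}_i$, $\mathcal{P}$ is a transient family for $S\cup\mathfrak{r}_1\cup\dots\cup\mathfrak{r}_{i-1}$. Blocks: for a pair $P=(F^o,F^u)$ with $F^o\cup F^u$ acyclic, fix a topological order $\prec$ of $F^o\cup F^u$ and let $z_1\prec\dots\prec z_k$ be the vertices of $V(F^o)\cap V(F^u)$. For $j\in\{1,\dots,k-1\}$, the $j$-th block of $P$ (an $P$-block) is the subgraph of $F^o\cup F^u$ induced by $\{v: z_j\preceq v\preceq z_{j+1}\}$. Dependency graph: for $I,J\in\{B,R\}$ with $I\ne J$, an $I$-block $b_1$ depends on a $J$-block $b_2$ if there is an edge $e\in E(b_1)\cap E(I^u)\cap E(b_2)\cap E(J^o)$ with $c(e)<d_I+d_J$. The dependency graph $D$ of $G$ is the directed graph whose vertices are all blocks of $B$ and of $R$, with an arc from $b_1$ to $b_2$ whenever $b_1$ depends on $b_2$. *)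

From mathcomp Require Import all_boot.
Set Implicit Arguments. Unset Strict Implicit. Unset Printing Implicit Defensive.

Section UpdateFlows.
Variable V : finType.

Definition pedges (p : seq V) : seq (V * V) := zip p (behead p).

Definition stpath (A : rel V) (s t : V) (p : seq V) : bool :=
  if p is x :: q then [&& x == s, path A x q, last x q == t & uniq p]
  else false.

Variable E : {set V * V}.
Variables (s t : V) (c : V * V -> nat).

Definition Erel : rel V := fun u v => (u, v) \in E.

Definition stflow (d : nat) (F : seq V) : bool :=
  stpath Erel s t F && all (fun e => d <= c e) (pedges F).

Variable I : finType.
Variables (d : I -> nat) (Fo Fu : I -> seq V).

Definition update_flow_network : Prop :=
  (forall i, stflow (d i) (Fo i) /\ stflow (d i) (Fu i)) /\
  (forall e, e \in E -> \sum_(i | e \in pedges (Fo i)) d i <= c e).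

Definition active (U : {set V * I}) (i : I) : rel V := fun u v =>
  ((u, v) \in pedges (Fo i) ++ pedges (Fu i)) &&
  ((((u, i) \notin U) && ((u, v) \in pedges (Fo i))) ||
   (((u, i) \in U) && ((u, v) \in pedges (Fu i)))).

Definition transient (U : {set V * I}) (i : I) (T : seq V) : Prop :=
  stpath (active U i) s t T /\
  (forall p, stpath (active U i) s t p -> p = T).

Definition transient_family (U : {set V * I}) : Prop :=
  exists T : I -> seq V,
    (forall i, transient U i (T i)) /\
    (forall e, e \in E -> \sum_(i | e \in pedges (T i)) d i <= c e).

Definition update_sequence (rs : seq {set V * I}) : Prop :=
  all (fun r => r != set0) rs /\
  (forall i j, i < size rs -> j < size rs -> i != j ->
     [disjoint nth set0 rs i & nth set0 rs j]) /\
  \bigcup_(r <- rs) r = setT.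

Definition feasible_update_sequence (rs : seq {set V * I}) : Prop :=
  update_sequence rs /\
  forall k, k < size rs -> forall S : {set V * I}, S \subset nth set0 rs k ->
    transient_family (S :|: \bigcup_(j < k) nth set0 rs j).

Definition union_rel (i : I) : rel V := fun u v =>
  ((u, v) \in pedges (Fo i)) || ((u, v) \in pedges (Fu i)).

Definition acyclic_pair (i : I) : Prop :=
  ~ exists cy : seq V, [/\ cy != [::], uniq cy & cycle (union_rel i) cy].

Definition topo_order (i : I) (tord : seq V) : Prop :=
  [/\ uniq tord,
      (forall v, (v \in tord) = (v \in Fo i) || (v \in Fu i)) &
      (forall u v, union_rel i u v -> index u tord < index v tord)].

Definition common (i : I) (tord : seq V) : seq V :=
  [seq v <- tord | (v \in Fo i) && (v \in Fu i)].

(* blocks are indexed by (i, j) with j in 0..k-2 (j-th block is between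
   z_(j) and z_(j+1), 0-based) *)
Definition valid_block (tord : I -> seq V) (b : I * nat) : bool :=
  b.2.+1 < size (common b.1 (tord b.1)).

Definition in_block (tord : I -> seq V) (b : I * nat) (v : V) : bool :=
  let to := tord b.1 in
  let z := common b.1 to in
  [&& v \in to,
      index (nth v z b.2) to <= index v to &
      index v to <= index (nth v z b.2.+1) to].

Definition block_edge (tord : I -> seq V) (b : I * nat) (e : V * V) : bool :=
  [&& union_rel b.1 e.1 e.2, in_block tord b e.1 & in_block tord b e.2].

Definition depends (tord : I -> seq V) (b1 b2 : I * nat) : bool :=
  [&& b1.1 != b2.1, valid_block tord b1, valid_block tord b2 &
   [exists e : V * V,
      [&& block_edge tord b1 e, e \in pedges (Fu b1.1),
          block_edge tord b2 e, e \in pedges (Fo b2.1) &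
          c e < d b1.1 + d b2.1]]].

Definition dependency_has_cycle (tord : I -> seq V) : Prop :=
  exists cy : seq (I * nat),
    [/\ cy != [::], uniq cy, all (valid_block tord) cy & cycle (depends tord) cy].

End UpdateFlows.

From mathcomp Require Import all_boot.
Set Implicit Arguments. Unset Strict Implicit. Unset Printing Implicit Defensive.

(* Schedule each block b by the round in which the update at its first vertex z is applied;
   z is common to the old and the new flow, and no other common vertex lies strictly inside b.
   Every edge of F^o u F^u moves forward in the topological order, and an edge of either flow
   cannot jump over a vertex common to both, so every transient path passes through z; from z
   on it is forced to follow, through b, the new flow if z is updated and the old flow otherwise.
   If b1 depends on b2 via an edge e and b1's start were scheduled no later than b2's, the state
   reached in that round with b1's start updated and b2's not would route both pairs over e,
   exceeding c(e).  Hence rounds strictly decrease along dependencies, so D has no cycle. *)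

Section PathEdges.
Variable V : finType.
Implicit Types (A : rel V) (p q : seq V) (x y u v w : V).

Lemma sorted_pedgesE A p : sorted A p = all (fun e => A e.1 e.2) (pedges p).
Proof. by case: p => // x q; elim: q x => //= y q IHq x; rewrite IHq. Qed.

Lemma path_pedges A x q u v : path A x q -> (u, v) \in pedges (x :: q) -> A u v.
Proof. by rewrite -[path A x q]/(sorted A (x :: q)) sorted_pedgesE => /allP/[apply]. Qed.

Lemma pedgesP x0 p u v :
  reflect (exists2 k, k.+1 < size p & nth x0 p k = u /\ nth x0 p k.+1 = v)
          ((u, v) \in pedges p).
Proof.
have size_pedges : size (pedges p) = (size p).-1.
  by rewrite size_zip size_behead; apply/minn_idPr; exact: leq_pred.
apply: (iffP (nthP (x0, x0))) => [[k] | [k lt_k [<- <-]]].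
  rewrite size_pedges ltn_predRL => lt_k.
  by rewrite nth_zip_cond size_pedges ltn_predRL lt_k nth_behead => -[<- <-]; exists k.
exists k; first by rewrite size_pedges ltn_predRL.
by rewrite nth_zip_cond size_pedges ltn_predRL lt_k nth_behead.
Qed.

Lemma mem_pedges p u v : (u, v) \in pedges p -> (u \in p) && (v \in p).
Proof. by case/(pedgesP u) => k lt_k [<- <-]; rewrite !mem_nth // ltnW. Qed.

Lemma pedges_index p u v : uniq p -> (u, v) \in pedges p -> index v p = (index u p).+1.
Proof. by move=> p_uniq /(pedgesP u) [k lt_k [<- <-]]; rewrite !index_uniq // ltnW. Qed.

Lemma pedges_succ_unique p u v w :
  uniq p -> (u, v) \in pedges p -> (u, w) \in pedges p -> v = w.
Proof.
move=> p_uniq uv uw; have /andP [_ vp] := mem_pedges uv; have /andP [_ wp] := mem_pedges uw.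
by apply: (index_inj v vp wp); rewrite /= (pedges_index p_uniq uv) (pedges_index p_uniq uw).
Qed.

Lemma pedges_neq_last x q u v : uniq (x :: q) -> (u, v) \in pedges (x :: q) -> u != last x q.
Proof.
move=> xq_uniq uv; have /andP [_] := mem_pedges uv.
rewrite -index_mem (pedges_index xq_uniq uv); apply: contraTneq => ->.
by rewrite index_last //= ltnn.
Qed.

Lemma path_succ A x q w :
  path A x q -> w \in x :: q -> w != last x q -> exists2 y, (w, y) \in pedges (x :: q) & A w y.
Proof.
elim: q x => [|y q IHq] x /=; first by rewrite mem_seq1 => _ /eqP ->; rewrite eqxx.
case/andP=> Axy yq; rewrite in_cons => /predU1P [-> _ | wq w_last].
  by exists y; rewrite ?mem_head.
by have [z wz Awz] := IHq y yq wq w_last; exists z; rewrite // [pedges _]/= in_cons wz orbT.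
Qed.

Lemma stpathE A s t p :
  stpath A s t p -> exists2 q, p = s :: q & [/\ path A s q, last s q = t & uniq p].
Proof. by case: p => // x q /and4P [/eqP -> xq /eqP last_q uniq_q]; exists q. Qed.

End PathEdges.

Section RankOrder.
Variables (V : finType) (tord : seq V).
Implicit Types (A : rel V) (F G H : seq V) (a b x y z : V).

Definition before : rel V := fun x y => index x tord < index y tord.

Lemma before_trans : transitive before.
Proof. by move=> y x z; apply: ltn_trans. Qed.

Lemma before_irr : irreflexive before.
Proof. by move=> x; apply: ltnn. Qed.

Lemma before_eq_or x y : (x \in tord) || (y \in tord) -> ~~ before y x -> x = y \/ before x y.
Proof.
rewrite /before -leqNgt leq_eqVlt -!index_mem => xy_tord /predU1P [eq_xy | ]; last by right.
by left; rewrite eq_xy orbb in xy_tord; apply: (index_inj x _ _ eq_xy); rewrite -index_mem ?eq_xy.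
Qed.

Lemma sorted_before_ltn_index H :
  sorted before H -> {in H &, forall x y, (index x H < index y H) = before x y}.
Proof.
move=> H_sorted x y xH yH; have H_before := sorted_ltn_index before_trans H_sorted.
case: ltngtP => [lt_xy | lt_yx | eq_xy]; first by rewrite (H_before x y xH yH lt_xy).
  by apply/esym/negbTE; rewrite /before -leqNgt; exact: ltnW (H_before y x yH xH lt_yx).
by rewrite (index_inj x xH yH eq_xy) before_irr.
Qed.

Lemma sorted_before_leq_index H :
  sorted before H -> {in H &, forall x y, (index x H <= index y H) = ~~ before y x}.
Proof. by move=> H_sorted x y xH yH; rewrite leqNgt sorted_before_ltn_index. Qed.

Lemma uniq_sorted_before : uniq tord -> sorted before tord.
Proof.
move=> tord_uniq; rewrite sorted_pedgesE; apply/allP => -[a b] ab.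
by rewrite /before /= (pedges_index tord_uniq ab).
Qed.

Lemma before_jump H z a b :
  sorted before H -> z \in H -> (a, b) \in pedges H -> before a z -> ~~ before b z -> b = z.
Proof.
move=> H_sorted zH ab a_z b_z; have /andP [aH bH] := mem_pedges ab.
have H_uniq := sorted_uniq before_trans before_irr H_sorted.
rewrite -!(sorted_before_ltn_index H_sorted) // in a_z b_z.
apply: (index_inj b bH zH); apply/eqP.
by rewrite eqn_leq (pedges_index H_uniq ab) a_z leqNgt -(pedges_index H_uniq ab) b_z.
Qed.

Lemma path_through_common F G A z x q :
  sorted before F -> sorted before G -> z \in F -> z \in G -> z \in tord ->
  (forall a b, A a b -> ((a, b) \in pedges F) || ((a, b) \in pedges G)) ->
  path A x q -> ~~ before z x -> ~~ before (last x q) z -> z \in x :: q.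
Proof.
move=> F_sorted G_sorted zF zG z_tord A_sub.
have tord_z w : (w \in tord) || (z \in tord) by rewrite z_tord orbT.
elim: q x => [|y q IHq] x /=.
  by move=> _ z_x; case: (before_eq_or (tord_z x) z_x) => [-> | ->]; rewrite ?mem_head.
case/andP=> Axy yq z_x q_z; have [-> | x_z] := before_eq_or (tord_z x) z_x; first exact: mem_head.
rewrite in_cons; apply/orP; right; have [y_z | z_y] := boolP (before y z).
  by apply: IHq; rewrite // /before -leqNgt ltnW.
case/orP: (A_sub _ _ Axy) => /before_jump jump.
  by rewrite (jump z F_sorted zF x_z z_y) mem_head.
by rewrite (jump z G_sorted zG x_z z_y) mem_head.
Qed.

Lemma before_nth_filter_succ (P : pred V) j w x0 :
  uniq tord -> j.+1 < size (filter P tord) -> P w -> w \in tord ->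
  before (nth x0 (filter P tord) j) w -> ~~ before w (nth x0 (filter P tord) j.+1).
Proof.
move=> tord_uniq lt_j Pw w_tord; set zs := filter P tord.
have zs_sorted : sorted before zs := sorted_filter before_trans P (uniq_sorted_before tord_uniq).
have zs_uniq : uniq zs := filter_uniq P tord_uniq.
have wz : w \in zs by rewrite mem_filter Pw.
have jz : j < size zs := ltnW lt_j.
rewrite -!(sorted_before_ltn_index zs_sorted) ?mem_nth // !index_uniq //.
by rewrite ltnS -ltnNge.
Qed.

End RankOrder.

Section ForcedPaths.
Variable V : finType.
Implicit Types (r A : rel V) (tord F G T : seq V) (s t u v w y z : V).

Lemma stpath_forced_edge r A s t F T w y :
  stpath r s t F -> stpath A s t T -> w \in T -> (w, y) \in pedges F ->
  (forall y', A w y' -> (w, y') \in pedges F) -> (w, y) \in pedges T.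
Proof.
move=> /stpathE [qF -> [_ qF_last F_uniq]] /stpathE [qT -> [qT_path qT_last _]] wT wy forced.
have w_last : w != last s qT by rewrite qT_last -qF_last (pedges_neq_last F_uniq wy).
have [y' wy' Awy'] := path_succ qT_path wT w_last.
by rewrite (pedges_succ_unique F_uniq wy (forced _ Awy')).
Qed.

Lemma stpath_forced_segment r A s t F T i j :
  stpath r s t F -> stpath A s t T -> nth s F i \in T -> i <= j -> j.+1 < size F ->
  (forall l y, i <= l <= j -> A (nth s F l) y -> (nth s F l, y) \in pedges F) ->
  (nth s F j, nth s F j.+1) \in pedges T.
Proof.
move=> F_st T_st iT le_ij lt_jF forced.
have step k : i <= k <= j -> nth s F k \in T -> (nth s F k, nth s F k.+1) \in pedges T.
  move=> ikj kT; apply: (stpath_forced_edge F_st T_st kT) => [|y]; last exact: forced.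
  by apply/(pedgesP s); exists k => //; apply: leq_ltn_trans lt_jF; case/andP: ikj.
have onT k : i <= k <= j.+1 -> nth s F k \in T.
  elim: k => [|k IHk]; first by rewrite leqn0 => /andP [/eqP <-].
  rewrite leq_eqVlt => /andP [/predU1P [<- // | le_ik le_kj]].
  rewrite !ltnS in le_ik le_kj.
  have kT : nth s F k \in T by apply: IHk; rewrite le_ik leqW.
  have ikj : i <= k <= j by rewrite le_ik le_kj.
  by have /andP [_ ->] := mem_pedges (step k ikj kT).
by apply: step; [rewrite le_ij leqnn | apply: onT; rewrite le_ij leqnSn].
Qed.

Lemma stpath_sorted_bounds r tord s t F z :
  stpath r s t F -> sorted (before tord) F -> z \in F ->
  ~~ before tord z s /\ ~~ before tord t z.
Proof.
move=> /stpathE [qF -> [_ qF_last F_uniq]] F_sorted zF.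
have tF : t \in s :: qF by rewrite -qF_last mem_last.
rewrite -!(sorted_before_leq_index F_sorted) ?mem_head //; split; first by rewrite /= eqxx.
by rewrite -qF_last index_last // -ltnS -[(size qF).+1]/(size (s :: qF)) index_mem.
Qed.

Lemma stpath_follows_flow r A tord s t F G T z u v :
  stpath r s t F -> sorted (before tord) F -> sorted (before tord) G ->
  z \in F -> z \in G -> z \in tord ->
  (forall a b, A a b -> ((a, b) \in pedges F) || ((a, b) \in pedges G)) ->
  (forall y, A z y -> (z, y) \in pedges F) ->
  (forall w, w \in F -> w \in G -> before tord z w -> before tord u w) ->
  (u, v) \in pedges F -> ~~ before tord u z ->
  stpath A s t T -> (u, v) \in pedges T.
Proof.
move=> F_st F_sorted G_sorted zF zG z_tord A_sub z_forced gap uv u_z T_st.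
have F_uniq := sorted_uniq (@before_trans _ tord) (@before_irr _ tord) F_sorted.
have /andP [uF vF] := mem_pedges uv.
have zT : z \in T.
  have [z_s t_z] := stpath_sorted_bounds F_st F_sorted zF.
  have [qT -> [qT_path qT_last _]] := stpathE T_st.
  by apply: (path_through_common F_sorted G_sorted zF zG z_tord A_sub qT_path z_s); rewrite qT_last.
have forced l y : index z F <= l <= index u F -> A (nth s F l) y -> (nth s F l, y) \in pedges F.
  move=> /andP [z_l l_u]; have lF : l < size F by rewrite (leq_ltn_trans l_u) ?index_mem.
  have wF : nth s F l \in F by rewrite mem_nth.
  rewrite -[l](index_uniq s lF F_uniq) !(sorted_before_leq_index F_sorted) // in z_l l_u.
  have z_or : (z \in tord) || (nth s F l \in tord) by rewrite z_tord.
  have [<- | z_w] := before_eq_or z_or z_l; first exact: z_forced.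
  move=> /A_sub /orP [// | /mem_pedges /andP [wG _]].
  by have := gap _ wF wG z_w; rewrite (negbTE l_u).
have := stpath_forced_segment F_st T_st _ _ _ forced.
rewrite -(pedges_index F_uniq uv) !nth_index //; apply=> //.
  by rewrite (sorted_before_leq_index F_sorted).
by rewrite index_mem.
Qed.

End ForcedPaths.

Section Blocks.
Variables (V I : finType) (Fo Fu tord : I -> seq V).
Hypothesis topo : forall i, topo_order Fo Fu i (tord i).

Definition block_start (x0 : V) (b : I * nat) : V := nth x0 (common Fo Fu b.1 (tord b.1)) b.2.

Lemma flows_sorted i : sorted (before (tord i)) (Fo i) && sorted (before (tord i)) (Fu i).
Proof.
have [_ _ topo_lt] := topo i.
by rewrite !sorted_pedgesE; apply/andP; split; apply/allP => -[u v] uv;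
  apply: topo_lt; rewrite /union_rel uv ?orbT.
Qed.

Lemma block_start_common x0 i j :
  valid_block Fo Fu tord (i, j) -> [/\ block_start x0 (i, j) \in Fo i,
                                 block_start x0 (i, j) \in Fu i & block_start x0 (i, j) \in tord i].
Proof.
move=> valid; have := mem_nth x0 (ltnW valid).
by rewrite mem_filter => /andP [/andP [zO zU] z_tord].
Qed.

Lemma block_edge_bounds x0 i j u v :
  valid_block Fo Fu tord (i, j) -> block_edge Fo Fu tord (i, j) (u, v) ->
  [/\ ~~ before (tord i) u (block_start x0 (i, j)), before (tord i) u v
     & ~~ before (tord i) (block_start x0 (i, j.+1)) v].
Proof.
have [_ _ topo_lt] := topo i.
move=> valid /and3P [uv /and3P [_ z_u _] /and3P [_ _ v_z]].
rewrite /= (set_nth_default x0 _ (ltnW valid)) in z_u.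
rewrite /= (set_nth_default x0 _ valid) in v_z.
by split; rewrite /before -?leqNgt //; exact: topo_lt uv.
Qed.

Lemma block_no_inner_common x0 i j w :
  valid_block Fo Fu tord (i, j) -> w \in Fo i -> w \in Fu i ->
  before (tord i) (block_start x0 (i, j)) w -> ~~ before (tord i) w (block_start x0 (i, j.+1)).
Proof.
have [tord_uniq tord_mem _] := topo i.
move=> valid wO wU; apply: before_nth_filter_succ; rewrite ?wO ?wU //.
by rewrite tord_mem wO.
Qed.

Variables (E : {set V * V}) (s t : V).
Hypothesis old_stpath : forall i, stpath (Erel E) s t (Fo i).
Hypothesis new_stpath : forall i, stpath (Erel E) s t (Fu i).

Lemma transient_follows_block U i j T e :
  valid_block Fo Fu tord (i, j) -> stpath (active Fo Fu U i) s t T ->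
  block_edge Fo Fu tord (i, j) e ->
  e \in pedges (if (block_start s (i, j), i) \in U then Fu i else Fo i) -> e \in pedges T.
Proof.
case: e => u v valid T_st e_block.
have [zO zU z_tord] := block_start_common s valid.
have /andP [Fo_sorted Fu_sorted] := flows_sorted i.
have [u_z uv v_z'] := block_edge_bounds s valid e_block.
have gap w : w \in Fo i -> w \in Fu i ->
    before (tord i) (block_start s (i, j)) w -> before (tord i) u w.
  move=> wO wU /(block_no_inner_common valid wO wU).
  rewrite /before -!leqNgt in v_z' * => z'_w; exact: leq_trans uv (leq_trans v_z' z'_w).
have A_sub a b : active Fo Fu U i a b -> ((a, b) \in pedges (Fo i)) || ((a, b) \in pedges (Fu i)).
  by case/andP; rewrite mem_cat.
case: ifP => z_U e_F.
- apply: (stpath_follows_flow (A := active Fo Fu U i) (new_stpath i) Fu_sorted Fo_sorted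
            zU zO z_tord) => //.
  + by move=> a b /A_sub; rewrite orbC.
  + by move=> y /andP [_]; rewrite z_U.
  + by move=> w wU wO; apply: gap.
- apply: (stpath_follows_flow (A := active Fo Fu U i) (old_stpath i) Fo_sorted Fu_sorted
            zO zU z_tord) => //.
  by move=> y /andP [_]; rewrite z_U /= orbF.
Qed.

End Blocks.

Definition round_of (T : finType) (rs : seq {set T}) (x : T) : nat :=
  find (fun r : {set T} => x \in r) rs.

Lemma round_ofP (T : finType) (rs : seq {set T}) x :
  x \in \bigcup_(r <- rs) r -> round_of rs x < size rs /\ x \in nth set0 rs (round_of rs x).
Proof.
rewrite bigcup_seq => /bigcupP [r r_rs xr].
have rs_x : has (fun r : {set T} => x \in r) rs by apply/hasP; exists r.
by rewrite /round_of -has_find; split=> //; exact: (nth_find set0 rs_x).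
Qed.

Lemma decreasing_cycle_nil (T : eqType) (f : T -> nat) (cy : seq T) :
  cycle (fun a b => f b < f a) cy -> cy = [::].
Proof.
case: cy => // x q /= /(order_path_min (fun _ _ _ yx zy => ltn_trans zy yx)) /allP.
by move=> /(_ x); rewrite mem_rcons mem_head ltnn => /(_ isT).
Qed.

Section Rounds.
Variables (V I : finType) (E : {set V * V}) (s t : V) (c : V * V -> nat) (d : I -> nat).
Variables (Fo Fu tord : I -> seq V) (rs : seq {set V * I}).
Hypothesis topo : forall i, topo_order Fo Fu i (tord i).
Hypothesis old_stpath : forall i, stpath (Erel E) s t (Fo i).
Hypothesis new_stpath : forall i, stpath (Erel E) s t (Fu i).
Hypothesis feasible : feasible_update_sequence E s t c d Fo Fu rs.

Lemma feasible_separates x1 x2 :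
  x1 != x2 -> round_of rs x1 <= round_of rs x2 ->
  exists2 U : {set V * I}, (x1 \in U) && (x2 \notin U) & transient_family E s t c d Fo Fu U.
Proof.
have [[_ [_ cover]] feas] := feasible.
have /round_ofP [k_lt x2_k] : x2 \in \bigcup_(r <- rs) r by rewrite cover in_setT.
have /round_ofP [_ x1_k1] : x1 \in \bigcup_(r <- rs) r by rewrite cover in_setT.
move=> x12 le_k1k; set k := round_of rs x2 in k_lt x2_k le_k1k.
exists (nth set0 rs k :&: [set x1] :|: \bigcup_(j < k) nth set0 rs j); last first.
  by apply: feas; rewrite ?subsetIl.
rewrite !in_setU !in_setI !in_set1 eqxx eq_sym (negbTE x12) andbF /=; apply/andP; split.
  move: le_k1k; rewrite leq_eqVlt => /predU1P [<- | lt_k1k]; first by rewrite x1_k1.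
  by apply/orP; right; apply/bigcupP; exists (Ordinal lt_k1k).
by apply/bigcupP => -[[j lt_jk] _ /=]; apply/negP; rewrite (before_find _ lt_jk).
Qed.

Definition block_round (b : I * nat) : nat := round_of rs (block_start Fo Fu tord s b, b.1).

Lemma depends_block_round_lt b1 b2 :
  depends c d Fo Fu tord b1 b2 -> block_round b2 < block_round b1.
Proof.
case: b1 b2 => [i1 j1] [i2 j2].
case/and4P=> /= i12 valid1 valid2 /existsP [e /and5P [e1 eFu1 e2 eFo2 ce]].
rewrite ltnNge; apply/negP => le_round.
have x12 : (block_start Fo Fu tord s (i1, j1), i1) != (block_start Fo Fu tord s (i2, j2), i2).
  by apply: contra_neq i12 => -[_ ->].
have [U /andP [x1U x2U] [T [T_trans T_cap]]] := feasible_separates x12 le_round.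
have follows := transient_follows_block topo old_stpath new_stpath.
have eT1 : e \in pedges (T i1) by apply: (follows _ _ _ _ _ valid1 (T_trans i1).1 e1); rewrite x1U.
have eT2 : e \in pedges (T i2).
  by apply: (follows _ _ _ _ _ valid2 (T_trans i2).1 e2); rewrite (negbTE x2U).
have eE : e \in E.
  have [q Fu1 [q_path _ _]] := stpathE (new_stpath i1).
  by case: e {e1 e2 eFo2 ce eT1 eT2} eFu1 => u v; rewrite Fu1 => /(path_pedges q_path).
have := T_cap e eE; rewrite (bigD1 i1) //= (bigD1 i2) /= ?eT2 1?eq_sym // addnA.
by move=> /(leq_trans (leq_addr _ _)); rewrite leqNgt ce.
Qed.

End Rounds.

Theorem mainTheorem4 (V : finType) (E : {set V * V}) (s t : V)
  (c : V * V -> nat) (d : bool -> nat) (Fo Fu : bool -> seq V)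
  (tord : bool -> seq V) :
  update_flow_network E s t c d Fo Fu ->
  (forall i, acyclic_pair Fo Fu i) ->
  (forall i, topo_order Fo Fu i (tord i)) ->
  dependency_has_cycle c d Fo Fu tord ->
  ~ exists rs : seq {set V * bool}, feasible_update_sequence E s t c d Fo Fu rs.
Proof.
move=> [flows _] _ topo [cy [cy_nonnil _ _ cy_depends]] [rs feasible].
have old_stpath i : stpath (Erel E) s t (Fo i) by case/andP: (flows i).1.
have new_stpath i : stpath (Erel E) s t (Fu i) by case/andP: (flows i).2.
move/eqP: cy_nonnil; apply; apply: (decreasing_cycle_nil (f := block_round s Fo Fu tord rs)).
apply: sub_cycle cy_depends => b1 b2.
exact: (depends_block_round_lt topo old_stpath new_stpath feasible).
Qed.
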